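(* Let $D$ be a good drawing of $K_n$ with $cr(D)\ge H(n)$ and let $m=\lfloor n/2\rfloor-2$. For every face $F\in\mathcal F(D)$ such that, with respect to $F$, $\Delta^{(3)}_m(D)\ge\Delta^{(2)}_m(D)$, we have $\Delta^{(3)}_{m-1}(D)\ge 0$ with respect to $F$.
   Context: A good drawing of $K_n$ is a drawing on the sphere $S^2$ in which vertices are distinct points and each edge is a simple curve joining its endpoints containing no other vertex, such that any two edges share finitely many points, no two edges meet tangentially, no three edges cross at a common point, any two edges cross at most once, and adjacent edges do not cross. $cr(D)$ is the number of crossings and $H(n)=\frac14\lfloor\frac n2\rfloor\lfloor\frac{n-1}2\rfloor\lfloor\frac{n-2}2\rfloor\lfloor\frac{n-3}2\rfloor$. $\mathcal F(D)$ is the set of faces. $k$-edges w.r.t. a reference face $F$: for an oriented edge $e=uv$ and $w\notin\{u,v\}$, the triangle $uvw$ has orientation $+$ if $F$ lies in the part of $S^2$ to the left of $e$ bounded by the triangle, else $-$; if $i$ of the $n-2$ triangles are $+$, $e$ is a $k$-edge with $k=\min(i,n-2-i)$; $E_k(D)$ is the number of $k$-edges. $k$-deviations (w.r.t. $F$), for $0\le k\le\lfloor n/2\rfloor-2$: $\Delta_k(D)=E_k(D)-3(k+1)$, $\Delta^{(2)}_k(D)=\sum_{i=0}^k(k+1-i)\Delta_i(D)$, $\Delta^{(3)}_k(D)=\sum_{i=0}^k\binom{k+2-i}{2}\Delta_i(D)$, and $\Delta^{(3)}_{-1}(D)=0$. *)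

From HB Require Import structures.
From mathcomp Require Import all_boot all_order all_algebra.
From mathcomp Require Import all_classical all_reals all_analysis.
Set Implicit Arguments. Unset Strict Implicit. Unset Printing Implicit Defensive.
Import Order.TTheory GRing.Theory Num.Theory numFieldNormedType.Exports.
Local Open Scope classical_set_scope.
Local Open Scope ring_scope.

Notation pt R := (R * R * R)%type.

Section GoodDrawings.
Variable R : realType.

Definition px (a : (pt R)) : R := a.1.1.
Definition py (a : (pt R)) : R := a.1.2.
Definition pz (a : (pt R)) : R := a.2.
Definition dot (a b : (pt R)) : R := px a * px b + py a * py b + pz a * pz b.
Definition vsub (a b : (pt R)) : (pt R) := (px a - px b, py a - py b, pz a - pz b).
Definition vscale (c : R) (a : (pt R)) : (pt R) := (c * px a, c * py a, c * pz a).
Definition cross (a b : (pt R)) : (pt R) :=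
  (py a * pz b - pz a * py b, pz a * px b - px a * pz b, px a * py b - py a * px b).

Definition sphere : set (pt R) := [set a | dot a a = 1].
Definition I01 : set R := [set t | 0 <= t <= 1].

(* A drawing of K_n: vertex positions and, for each ordered pair (i,j), a curve
   parametrized on [0,1] from vertex i to vertex j; the curve for (j,i) is the
   reverse of the curve for (i,j). *)
Record drawing (n : nat) := Drawing {
  vpos : 'I_n -> (pt R) ;
  ecurve : 'I_n -> 'I_n -> R -> (pt R) }.

Variable n : nat.
Implicit Types (D : drawing n).

Definition arc D (i j : 'I_n) : set (pt R) := ecurve D i j @` I01.

Definition vset D : set (pt R) := range (vpos D).

Definition disk : set (R * R) := [set y | y.1 ^+ 2 + y.2 ^+ 2 < 1].

(* A and B cross (transversally) at p: some neighbourhood of p in S^2 is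
   homeomorphic to the open disk, with p |-> 0, A |-> horizontal diameter,
   B |-> vertical diameter. *)
Definition crossing_at (A B : set (pt R)) (p : (pt R)) : Prop :=
  exists U : set (pt R), open U /\ U p /\
  exists (h : (pt R) -> R * R) (g : R * R -> (pt R)),
    [/\ {within U `&` sphere, continuous h} /\ {within disk, continuous g},
        (forall x, (U `&` sphere) x -> disk (h x) /\ g (h x) = x),
        (forall y, disk y -> (U `&` sphere) (g y) /\ h (g y) = y),
        h p = (0, 0) &
        forall x, (U `&` sphere) x ->
          (A x <-> (h x).2 = 0) /\ (B x <-> (h x).1 = 0)].

Definition same_edge (i j k l : 'I_n) : bool :=
  ((i == k) && (j == l)) || ((i == l) && (j == k)).

Definition adjacent (i j k l : 'I_n) : bool :=
  [|| i == k, i == l, j == k | j == l].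

Definition good_drawing D : Prop :=
  [/\ injective (vpos D) /\ (forall k, sphere (vpos D k)),
      (forall i j : 'I_n, i != j ->
        [/\ {within I01, continuous ecurve D i j},
            (forall s t, I01 s -> I01 t -> ecurve D i j s = ecurve D i j t -> s = t),
            (forall t, I01 t -> sphere (ecurve D i j t)),
            ecurve D i j 0 = vpos D i /\ ecurve D i j 1 = vpos D j &
            (forall t, I01 t -> ecurve D j i t = ecurve D i j (1 - t))]),
      (forall i j k : 'I_n, i != j -> k != i -> k != j -> ~ arc D i j (vpos D k)),
      (forall i j k l : 'I_n, i != j -> k != l -> ~~ same_edge i j k l ->
         let X := (arc D i j `&` arc D k l) `\` vset D in
         [/\ finite_set X,
             adjacent i j k l -> X = set0,
             (forall p q, X p -> X q -> p = q) &
             (forall p, X p -> crossing_at (arc D i j) (arc D k l) p)]) &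
      (forall i j k l a b : 'I_n, i != j -> k != l -> a != b ->
         ~~ same_edge i j k l -> ~~ same_edge i j a b -> ~~ same_edge k l a b ->
         forall p, arc D i j p -> arc D k l p -> arc D a b p -> vset D p)].

(* number of crossings: unordered pairs of non-adjacent edges that meet
   (each such pair meets in exactly one crossing point, and no point lies on
   three edges, so this is the number of crossing points) *)
Definition cr D : nat :=
  #|[set ef : ('I_n * 'I_n) * ('I_n * 'I_n) |
      [&& (ef.1.1 < ef.1.2)%N, (ef.2.1 < ef.2.2)%N, (ef.1.1 < ef.2.1)%N,
          ef.1.2 != ef.2.1, ef.1.2 != ef.2.2 &
          `[< exists p, arc D ef.1.1 ef.1.2 p /\ arc D ef.2.1 ef.2.2 p >]]]|.

Definition drawing_set D : set (pt R) :=
  \bigcup_(e in [set e : 'I_n * 'I_n | e.1 != e.2]) arc D e.1 e.2.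
Definition complement D : set (pt R) := sphere `\` drawing_set D.
Definition is_face D (F : set (pt R)) : Prop :=
  exists x, complement D x /\ F = connected_component (complement D) x.

Definition tri D (u v w : 'I_n) : R -> (pt R) := fun t =>
  if t <= 3^-1 then ecurve D u v (3 * t)
  else if t <= 2 / 3 then ecurve D v w (3 * t - 1)
  else ecurve D w u (3 * t - 2).

(* stereographic projection from q in S^2 onto the plane orthogonal to q *)
Definition stereo (q a : (pt R)) : (pt R) :=
  vscale (1 - dot a q)^-1 (vsub a (vscale (dot a q) q)).

(* winds g q p k : the closed curve g (on [0,1], on S^2), seen in the
   stereographic projection from q, winds k times around p; the projection
   plane is oriented by the normal q (basis d0, q x d0). *)
Definition winds (g : R -> (pt R)) (q p : (pt R)) (k : int) : Prop :=
  exists theta : R -> R,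
    [/\ {within I01, continuous theta}, theta 0 = 0,
        theta 1 = 2 * pi * k%:~R &
        forall t, I01 t ->
          let d := vsub (stereo q (g t)) (stereo q p) in
          let d0 := vsub (stereo q (g 0)) (stereo q p) in
          let a := dot d d0 in
          let b := dot d (cross q d0) in
          a * sin (theta t) = b * cos (theta t) /\
          0 < a * cos (theta t) + b * sin (theta t)].

(* The triangle uvw has orientation + w.r.t. F: F lies in the component of
   S^2 minus the triangle lying to the left of the oriented closed curve
   u -> v -> w -> u (S^2 oriented by its outward normal).  Seen from a point
   q of F sent to infinity, this means the curve winds +1 around the points
   p of the other side. *)
Definition tri_plus D (F : set (pt R)) (u v w : 'I_n) : Prop :=
  exists q p, [/\ F q, sphere p, p <> q, ~ (tri D u v w @` I01) p &
                  winds (tri D u v w) q p 1].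

Definition nplus D F (u v : 'I_n) : nat :=
  #|[set w : 'I_n | [&& w != u, w != v & `[< tri_plus D F u v w >]]]|.

Definition kval D F (u v : 'I_n) : nat :=
  minn (nplus D F u v) (n - 2 - nplus D F u v)%N.

Definition Ek D F (k : nat) : nat :=
  #|[set e : 'I_n * 'I_n | (e.1 < e.2)%N && (kval D F e.1 e.2 == k)]|.

Definition Delta D F (k : nat) : int := (Ek D F k)%:Z - 3 * (k.+1)%:Z.
Definition Delta2 D F (k : nat) : int :=
  \sum_(i < k.+1) ((k.+1 - i)%N%:Z * Delta D F i).
Definition Delta3 D F (k : nat) : int :=
  \sum_(i < k.+1) ('C(k.+2 - i, 2)%N%:Z * Delta D F i).
(* Delta3_pred D F m = Delta^{(3)}_{m-1}, with Delta^{(3)}_{-1} = 0 *)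
Definition Delta3_pred D F (m : nat) : int :=
  if m is m'.+1 then Delta3 D F m' else 0.

End GoodDrawings.

(* H(n) = 1/4 floor(n/2) floor((n-1)/2) floor((n-2)/2) floor((n-3)/2);
   the product is always divisible by 4. *)
Definition Hn (n : nat) : nat :=
  ((n./2 * (n.-1)./2 * (n - 2)./2 * (n - 3)./2) %/ 4)%N.

From HB Require Import structures.
From mathcomp Require Import all_boot all_order all_algebra.
From mathcomp Require Import all_classical all_reals all_analysis.
Import Order.TTheory GRing.Theory Num.Theory.
Local Open Scope ring_scope.

Lemma sumr_bin2_recr (V : zmodType) (f : nat -> V) (k : nat) :
  \sum_(i < k.+1) f i *+ 'C(k.+2 - i, 2)
  = \sum_(i < k) f i *+ 'C(k.+1 - i, 2) + \sum_(i < k.+1) f i *+ (k.+1 - i).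
Proof.
have pascal (i : 'I_k.+1) : 'C(k.+2 - i, 2) = ('C(k.+1 - i, 2) + (k.+1 - i))%N.
  by rewrite subSn ?binS ?bin1 // ltnW.
rewrite (eq_bigr _ (fun i _ => congr1 _ (pascal i))).
under eq_bigr do rewrite mulrnDr.
by rewrite big_split /= big_ord_recr /= subSnn bin_small // mulr0n addr0.
Qed.

Section Deviations.
Variables (R : realType) (n : nat) (D : drawing R n) (F : set (pt R)).

Lemma Delta2E (k : nat) :
  Delta2 D F k = \sum_(i < k.+1) Delta D F i *+ (k.+1 - i).
Proof. by apply: eq_bigr => i _; rewrite -natz mulr_natl. Qed.

Lemma Delta3E (k : nat) :
  Delta3 D F k = \sum_(i < k.+1) Delta D F i *+ 'C(k.+2 - i, 2).
Proof. by apply: eq_bigr => i _; rewrite -natz mulr_natl. Qed.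

Lemma Delta3_predE (m : nat) :
  Delta3_pred D F m = Delta3 D F m - Delta2 D F m.
Proof.
case: m => [|m]; last first.
  by rewrite /= (Delta3E m.+1) Delta2E sumr_bin2_recr -Delta3E addrK.
by rewrite Delta3E Delta2E !big_ord1 subrr.
Qed.

End Deviations.

Theorem mainTheorem10 (R : realType) (n : nat) (D : drawing R n) :
  (4 <= n)%N -> good_drawing D -> (Hn n <= cr D)%N ->
  forall F : set (pt R), is_face D F ->
    Delta2 D F (n./2 - 2) <= Delta3 D F (n./2 - 2) ->
    0 <= Delta3_pred D F (n./2 - 2).
Proof. by move=> _ _ _ F _; rewrite Delta3_predE subr_ge0. Qed.
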